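(* Let $N\ge2$, $b_1,\dots,b_N\in\{0,1\}$ with $b_N=1$ and $\sum_j b_j2^{N-j}>1$, and let $\rho$ be the largest real root of $x^N-\sum_{j=1}^N b_jx^{N-j}$, so $1=\sum_{k=1}^N b_k\rho^{-k}$. Let $I_k=[0,\rho^{-k}]$, $1\le k\le N$. In dimension $1$, $\rho I_1=[0,1]$ is partitioned into the intervals $I_k$ with $b_k=1$ placed edge to edge, and $\rho I_k=I_{k-1}$ for $2\le k\le N$. For $d\ge1$, let the tiles be the boxes $I_{k_1}\times\cdots\times I_{k_d}$ (and their copies), and decompose each inflated box $\rho(I_{k_1}\times\cdots\times I_{k_d})=\rho I_{k_1}\times\cdots\times\rho I_{k_d}$ as the cartesian product of the one-dimensional decompositions of the factors. Then the tessellations of $\mathbb{R}^d$ constructed by inflation from these decompositions are aperiodic (not periodic).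
   Context: Sets are essentially disjoint if their intersection has Lebesgue measure $0$. A tessellation of $\mathbb{R}^d$ is a covering by pairwise essentially disjoint tiles of finitely many types; constructing by inflation means iterating the decomposition of the inflated tiles $\rho^n R$ to cover increasing regions of $\mathbb{R}^d$. A tessellation is periodic if it is invariant under translation by a lattice (a discrete additive subgroup of rank $d$) of $\mathbb{R}^d$. *)

From HB Require Import structures.
From mathcomp Require Import all_boot all_order all_algebra.
From mathcomp Require Import reals.
Set Implicit Arguments. Unset Strict Implicit. Unset Printing Implicit Defensive.
Import Order.TTheory GRing.Theory Num.Theory.
Local Open Scope ring_scope.

(* The polynomial x^N - sum_{j=1}^N b_j x^(N-j); b is 1-indexed (b j = b_j). *)
Definition inflation_poly (R : realFieldType) (N : nat) (b : nat -> bool) : {poly R} :=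
  'X^N - \sum_(1 <= j < N.+1) (b j)%:R *: 'X^(N - j).

(* A (labelled) tile in R^d: a type t (t i = k_i in {1..N}, the box being
   I_{k_1} x ... x I_{k_d}) and a translation vector x (its lower corner). *)
Definition tile (R : Type) (d : nat) := (('I_d -> nat) * ('I_d -> R))%type.

Definition tile_support (R : realFieldType) (d : nat) (rho : R) (T : tile R d)
  (y : 'I_d -> R) : Prop :=
  forall i, T.2 i <= y i <= T.2 i + rho ^- (T.1 i).

(* Position of I_j inside rho I_1 = [0,1]: the I_k with b_k = 1 placed edge to
   edge in increasing order of k, starting at 0. *)
Definition offset1 (R : realFieldType) (b : nat -> bool) (rho : R) (j : nat) : R :=
  \sum_(1 <= i < j) (b i)%:R * rho ^- i.

(* One-dimensional decomposition: rho I_k contains the child I_k' placed at o. *)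
Definition child1 (R : realFieldType) (N : nat) (b : nat -> bool) (rho : R)
  (k k' : nat) (o : R) : Prop :=
  (k = 1%N /\ (1 <= k' <= N)%N /\ b k' /\ o = offset1 b rho k')
  \/ ((2 <= k <= N)%N /\ k' = k.-1 /\ o = 0).

Definition childd (R : realFieldType) (N : nat) (b : nat -> bool) (rho : R) (d : nat)
  (t t' : 'I_d -> nat) (o : 'I_d -> R) : Prop :=
  forall i, child1 N b rho (t i) (t' i) (o i).

(* supertile n t x = the set of tiles obtained by iterating n times the
   decomposition of the inflated tile rho^n (x + B_t). *)
Fixpoint supertile (R : realFieldType) (N : nat) (b : nat -> bool) (rho : R) (d : nat)
  (n : nat) (t : 'I_d -> nat) (x : 'I_d -> R) : tile R d -> Prop :=
  match n with
  | 0 => fun T => T = (t, x)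
  | n'.+1 => fun T => exists t' o, childd N b rho t t' o /\
        supertile N b rho n' t' (fun i => rho * x i + o i) T
  end.

(* A tessellation (set of tiles) constructed by inflation: union of an
   increasing sequence of patches rho^n R_n (R_n a tile), decomposed n times,
   whose supports cover R^d. *)
Definition constructed_by_inflation (R : realFieldType) (N : nat) (b : nat -> bool)
  (rho : R) (d : nat) (Tl : tile R d -> Prop) : Prop :=
  exists (ts : nat -> 'I_d -> nat) (xs : nat -> 'I_d -> R),
    (forall n i, (1 <= ts n i <= N)%N) /\
    (forall n T, supertile N b rho n (ts n) (xs n) T ->
                 supertile N b rho n.+1 (ts n.+1) (xs n.+1) T) /\
    (forall T, Tl T <-> exists n, supertile N b rho n (ts n) (xs n) T) /\
    (forall y, exists T, Tl T /\ tile_support rho T y).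

(* A lattice of R^d: discrete additive subgroup of rank d. *)
Definition is_lattice (R : realFieldType) (d : nat) (L : ('I_d -> R) -> Prop) : Prop :=
  L (fun _ => 0) /\
  (forall u v, L u -> L v -> L (fun i => u i - v i)) /\
  (exists2 e : R, 0 < e & forall v, L v -> v <> (fun _ => 0) -> exists i, e <= `|v i|) /\
  (exists M : 'M[R]_d, (forall i, L (fun j => M i j)) /\ M \in unitmx).

Definition periodic (R : realFieldType) (d : nat) (Tl : tile R d -> Prop) : Prop :=
  exists L, is_lattice L /\
    forall v, L v -> forall (t : 'I_d -> nat) (x : 'I_d -> R),
      Tl (t, x) <-> Tl (t, fun i => x i + v i).

From HB Require Import structures.
From mathcomp Require Import all_boot all_order all_algebra.
From mathcomp Require Import reals ring lra zify.
Import Order.TTheory GRing.Theory Num.Theory.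
Local Open Scope ring_scope.
Set Implicit Arguments. Unset Strict Implicit.

(* Let v be a period with v_i <> 0. Projecting on the i-th axis gives a
   one-dimensional tessellation constructed by inflation which is invariant
   under translation by v_i. In dimension one the decomposition can be undone
   locally: a tile of type s - 1 is the canonical child of a tile of type s,
   or the child of a type-1 tile if b_(s-1) = 1, and in the second case that
   type-1 tile also has a child of type N (the only way a type-N tile arises),
   which decides between the two. Hence the m-times composed tessellation,
   rescaled by rho^-m, is determined by the original one and is invariant under
   v_i rho^-m. For m large this translation is shorter than the smallest tile
   rho^-N, so some tile overlaps its own translate, forcing v_i = 0. *)

Lemma bernoulli_le_exprn (R : realDomainType) (x : R) n :
  0 <= x -> 1 + n%:R * (x - 1) <= x ^+ n.
Proof.
move=> x0; elim: n => [|n IH]; first by rewrite mul0r addr0 expr0.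
rewrite exprSr -addn1 natrD mulrDl mul1r.
have := ler_wpM2r x0 IH; have := mulr_ge0 (ler0n R n) (sqr_ge0 (x - 1)); nra.
Qed.

Lemma exprn_unbounded (R : archiRealFieldType) (x C : R) : 1 < x -> exists m, C < x ^+ m.
Proof.
move=> x1; have x10 : 0 < x - 1 by rewrite subr_gt0.
have := archi_boundP (divr_ge0 (normr_ge0 C) (ltW x10)).
set m := Num.bound _; rewrite ltr_pdivrMr // => hm; exists m.
have := bernoulli_le_exprn m (ltW (lt_trans ltr01 x1)); have := ler_norm C; lra.
Qed.

Lemma unitmx_entry_neq0 (R : comUnitRingType) d (M : 'M[R]_d) :
  (0 < d)%N -> M \in unitmx -> exists i j, M i j != 0.
Proof.
case: d M => // d M _ uM.
have M0 : M != 0 by apply: contraTneq uM => ->; rewrite unitmxE det0 unitr0.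
have /existsP[i /existsP[j Mij]] : [exists i, [exists j, M i j != 0]].
  apply: contraNT M0 => /existsPn zero_rows; apply/eqP/matrixP => i j; rewrite mxE.
  by apply/eqP; move/existsPn: (zero_rows i) => /(_ j) /negPn.
by exists i, j.
Qed.

Lemma lattice_coord_neq0 (R : realFieldType) d (L : ('I_d -> R) -> Prop) :
  (0 < d)%N -> is_lattice L ->
  exists v i, [/\ L v, L (fun j => 0 - v j) & v i != 0].
Proof.
move=> d0 [L0 [LB [_ [M [LM uM]]]]]; have [i [j Mij]] := unitmx_entry_neq0 d0 uM.
by exists (fun k => M i k), j; split => //; apply: LB.
Qed.

Lemma horner_inflation_poly (R : realFieldType) N (b : nat -> bool) (x : R) :
  (inflation_poly R N b).[x] = x ^+ N - \sum_(1 <= j < N.+1) (b j)%:R * x ^+ (N - j).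
Proof.
rewrite /inflation_poly hornerD hornerN hornerXn horner_sum; congr (_ - _).
by apply: eq_bigr => j _; rewrite hornerZ hornerXn.
Qed.

Lemma inflation_poly_root_offset1 (R : realFieldType) N (b : nat -> bool) (rho : R) :
  rho != 0 -> root (inflation_poly R N b) rho -> offset1 b rho N.+1 = 1.
Proof.
move=> rho0 /rootP; rewrite horner_inflation_poly => /eqP; rewrite subr_eq0 => /eqP rhoN.
apply: (mulIf (expf_neq0 N rho0)); rewrite mul1r {2}rhoN /offset1 big_distrl /=.
apply: eq_big_nat => j /andP[_ jN]; rewrite -mulrA; congr (_ * _).
rewrite expfB_cond; first by rewrite mulrC.
by rewrite (negbTE rho0) add0n -ltnS.
Qed.

Lemma sum_b_gt1 N (b : nat -> bool) : b N ->
  (1 < \sum_(1 <= j < N.+1) b j * 2 ^ (N - j))%N -> (1 < \sum_(1 <= j < N.+1) b j)%N.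
Proof.
case: N b => [|N] b bN; first by rewrite big_geq.
rewrite !(big_nat_recr N.+1) //= bN subnn expn0 muln1 => h.
have : (\sum_(1 <= j < N.+1) b j * 2 ^ (N.+1 - j) <= (\sum_(1 <= j < N.+1) b j) * 2 ^ N.+1)%N.
  rewrite big_distrl /=; apply: leq_sum => j _; rewrite leq_mul2l.
  by case: (b j) => //=; rewrite leq_pexp2l // leq_subr.
lia.
Qed.

Lemma inflation_poly1_lt0 (R : realFieldType) N (b : nat -> bool) :
  (1 < \sum_(1 <= j < N.+1) b j)%N -> (inflation_poly R N b).[1] < 0.
Proof.
move=> hb; rewrite horner_inflation_poly expr1n.
under eq_bigr do rewrite expr1n mulr1.
by rewrite -natr_sum subr_lt0 ltr1n.
Qed.

Lemma inflation_polyN_ge0 (R : realFieldType) N (b : nat -> bool) :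
  (0 < N)%N -> 0 <= (inflation_poly R N b).[N%:R].
Proof.
move=> N0; rewrite horner_inflation_poly subr_ge0.
have N1 : 1 <= N%:R :> R by rewrite ler1n.
apply: (@le_trans _ _ (\sum_(1 <= j < N.+1) N%:R ^+ N.-1)).
  rewrite big_nat [X in _ <= X]big_nat; apply: ler_sum => j /andP[j1 jN].
  apply: (@le_trans _ _ (N%:R ^+ (N - j))).
    by case: (b j); rewrite ?mul1r // mul0r exprn_ge0 // (le_trans ler01 N1).
  by apply: ler_weXn2l => //; lia.
have -> : N%:R ^+ N = N%:R ^+ N.-1 * N%:R :> R by rewrite -exprSr prednK.
by rewrite sumr_const_nat subn1 mulr_natr.
Qed.

Lemma inflation_poly_root_gt1 (R : rcfType) N (b : nat -> bool) :
  (0 < N)%N -> (1 < \sum_(1 <= j < N.+1) b j)%N ->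
  exists2 x : R, 1 < x & root (inflation_poly R N b) x.
Proof.
move=> N0 hb; have p1 := inflation_poly1_lt0 R hb.
have N1 : 1 <= N%:R :> R by rewrite ler1n.
have [x /andP[x1 _] rx] := poly_ivt N1 (introT andP (conj (ltW p1) (inflation_polyN_ge0 R b N0))).
exists x => //; rewrite lt_def x1 andbT.
by apply: contraTneq rx => ->; rewrite /root lt_eqF.
Qed.

Section Decomposition1.

Variables (R : archiRealFieldType) (N : nat) (b : nat -> bool) (rho : R).

Local Notation len k := (rho ^- k).
Local Notation off := (offset1 b rho).
Local Notation child1 := (child1 N b rho).

Lemma offset1_small j : (j <= 1)%N -> off j = 0.
Proof. by move=> j1; rewrite /offset1 big_geq. Qed.

Lemma offset1S j : (0 < j)%N -> off j.+1 = off j + (b j)%:R * len j.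
Proof. by move=> j0; rewrite /offset1 big_nat_recr. Qed.

Lemma child1_range k k' o : child1 k k' o -> (1 <= k' <= N)%N.
Proof. by case=> [[_ [kr _]]|[kr [-> _]]] //; lia. Qed.

Lemma child1_typeN k o : (k <= N)%N -> child1 k N o -> k = 1%N /\ o = off N.
Proof. by move=> kN; case=> [[-> [_ [_ ->]]]|[kr [kN' _]]] //; lia. Qed.

Definition canon_type k := if k == 1%N then N else k.-1.
Definition canon_offset k : R := if k == 1%N then off N else 0.

Fixpoint supertile1 (n k : nat) (x : R) : nat * R -> Prop :=
  match n with
  | 0 => fun U => U = (k, x)
  | n'.+1 => fun U => exists k' o, child1 k k' o /\ supertile1 n' k' (rho * x + o) U
  end.

Lemma supertile1_range n k x U : (1 <= k <= N)%N -> supertile1 n k x U -> (1 <= U.1 <= N)%N.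
Proof.
elim: n k x => [|n IH] k x kr /=; first by move=> ->.
by case=> k' [o [c hU]]; apply: IH hU; apply: child1_range c.
Qed.

Lemma supertile1S n k x U : supertile1 n.+1 k x U <->
  exists S, supertile1 n k x S /\ exists k' o, child1 S.1 k' o /\ U = (k', rho * S.2 + o).
Proof.
elim: n k x => [|n IH] k x.
  split=> [[k' [o [c ->]]]|[S [-> [k' [o [c ->]]]]]]; last by exists k', o.
  by exists (k, x); split => //; exists k', o.
split=> [[k' [o [c /IH [S [hS hU]]]]]|[S [[k' [o [c hS]]] hU]]].
  by exists S; split => //; exists k', o.
by exists k', o; split => //; apply/IH; exists S.
Qed.

Hypothesis bN : b N.
Hypothesis offset1_end : offset1 b rho N.+1 = 1.

Lemma N_gt0 : (0 < N)%N.
Proof.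
rewrite lt0n; apply/eqP => N0; move: offset1_end.
by rewrite N0 offset1_small // => /eqP; rewrite eq_sym oner_eq0.
Qed.

Lemma child1_oneN : child1 1 N (off N).
Proof. by left; do !split => //; rewrite leqnn N_gt0. Qed.

Lemma child1_canon k : (1 <= k <= N)%N -> child1 k (canon_type k) (canon_offset k).
Proof.
rewrite /canon_type /canon_offset; case: eqP => [->|k1] kr; first exact: child1_oneN.
by right; do !split => //; lia.
Qed.

Hypothesis rho_gt1 : 1 < rho.

Lemma rho_gt0 : 0 < rho. Proof. exact: lt_trans ltr01 rho_gt1. Qed.

Lemma rho_neq0 : rho != 0. Proof. by rewrite gt_eqF ?rho_gt0. Qed.

Lemma len_gt0 k : 0 < len k. Proof. by rewrite invr_gt0 exprn_gt0 ?rho_gt0. Qed.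

Lemma rho_lenS k : rho * len k.+1 = len k.
Proof. by rewrite exprSr invfM mulrCA mulfV ?mulr1 ?rho_neq0. Qed.

Lemma rho_len1 : rho * len 1 = 1. Proof. by rewrite rho_lenS expr0 invr1. Qed.

Lemma len_le k k' : (k <= k')%N -> len k' <= len k.
Proof.
by move=> kk'; rewrite lef_pV2 ?posrE ?exprn_gt0 ?rho_gt0 // ler_eXn2l.
Qed.

Lemma len_le1 k : len k <= 1.
Proof. by have := len_le (leq0n k); rewrite expr0 invr1. Qed.

Lemma offset1_ge0 j : 0 <= off j.
Proof. by apply: sumr_ge0 => i _; rewrite mulr_ge0 ?ler0n ?ltW ?len_gt0. Qed.

Lemma offset1_le j j' : (j <= j')%N -> off j <= off j'.
Proof.
move=> /subnK <-; elim: (j' - j)%N => [|n IH] //; rewrite addSn.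
have [nj0|n0] := posnP (n + j); first by rewrite nj0 !offset1_small //; lia.
by rewrite offset1S // (le_trans IH) // lerDl mulr_ge0 ?ler0n ?ltW ?len_gt0.
Qed.

Lemma offset1_next j j' : b j -> (0 < j)%N -> (j < j')%N -> off j + len j <= off j'.
Proof.
by move=> bj j0 jj'; have := offset1S j0; rewrite bj mul1r => <-; apply: offset1_le.
Qed.

Lemma offset1_le1 j : (j <= N.+1)%N -> off j <= 1.
Proof. by rewrite -offset1_end; apply: offset1_le. Qed.

Lemma offset1_len_le1 j : b j -> (0 < j <= N)%N -> off j + len j <= 1.
Proof. by move=> bj /andP[j0 jN]; rewrite -offset1_end offset1_next. Qed.

Lemma child1_inside k k' o : child1 k k' o -> 0 <= o /\ o + len k' <= rho * len k.
Proof.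
case=> [[-> [kr [bk ->]]]|[kr [-> ->]]].
  by rewrite rho_len1 offset1_ge0 offset1_len_le1.
by case: k kr => // k kr; rewrite add0r rho_lenS.
Qed.

Lemma child1_disjoint k k1 k2 o1 o2 y : child1 k k1 o1 -> child1 k k2 o2 ->
  o1 <= y < o1 + len k1 -> o2 <= y < o2 + len k2 -> k1 = k2 /\ o1 = o2.
Proof.
case=> [[kE [r1 [b1 ->]]]|[kr [-> ->]]]; case=> [[kE' [r2 [b2 ->]]]|[kr' [-> ->]]] //;
  try lia.
move=> /andP[y1 y1'] /andP[y2 y2'].
have [lt|lt|->] := ltngtP k1 k2 => //.
- by have := offset1_next b1 (proj1 (andP r1)) lt; lra.
- by have := offset1_next b2 (proj1 (andP r2)) lt; lra.
Qed.

Lemma offset1_cover J w : 0 <= w < off J ->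
  exists j, [/\ (0 < j < J)%N, b j & off j <= w < off j + len j].
Proof.
elim: J => [|J IH] /andP[w0 wJ]; first by move: wJ; rewrite offset1_small //; lra.
have [lt|ge] := ltP w (off J).
  by have [|j [jr bj wj]] := IH; [rewrite w0 lt | exists j; split => //; lia].
have [J0|J0] := posnP J; first by move: wJ; rewrite J0 offset1_small //; lra.
move: wJ; rewrite offset1S //; case bJ: (b J); last by rewrite mul0r addr0; lra.
by rewrite mul1r => wJ; exists J; split => //; [lia | rewrite ge wJ].
Qed.

Lemma child1_cover k w : (1 <= k <= N)%N -> 0 <= w < rho * len k ->
  exists k' o, child1 k k' o /\ o <= w < o + len k'.
Proof.
move=> kr /andP[w0 w1]; have [k1|k1] := eqVneq k 1%N.
  move: w1; rewrite k1 rho_len1 -offset1_end => w1.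
  have [j [jr bj wj]] := offset1_cover (J := N.+1) (w := w) ltac:(by rewrite w0 w1).
  by exists j, (off j); split => //; left; do !split => //; lia.
exists k.-1, 0; split; first by right; do !split => //; lia.
by move: w1; case: k kr k1 => // k _ _; rewrite rho_lenS add0r w0.
Qed.

Lemma supertile1_inside n k x U : (1 <= k <= N)%N -> supertile1 n k x U ->
  rho ^+ n * x <= U.2 /\ U.2 + len U.1 <= rho ^+ n * (x + len k).
Proof.
elim: n k x => [|n IH] k x kr /=; first by move=> ->; rewrite !expr0 !mul1r.
case=> k' [o [c hU]]; have [lo hi] := IH _ _ (child1_range c) hU.
have [o0 ok] := child1_inside c; have P := exprn_gt0 n rho_gt0.
rewrite exprSr -!mulrA; split.
  by apply: le_trans lo; apply: ler_wpM2l; [exact: ltW | lra].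
by apply: le_trans hi _; apply: ler_wpM2l; [exact: ltW | lra].
Qed.

Lemma supertile1_cover n k x y : (1 <= k <= N)%N -> x <= y < x + len k ->
  exists U, supertile1 n k x U /\ U.2 <= rho ^+ n * y < U.2 + len U.1.
Proof.
elim: n k x y => [|n IH] k x y kr hy.
  by exists (k, x); split => //=; rewrite expr0 mul1r.
have [k' [o [c ho]]] : exists k' o, child1 k k' o /\ o <= rho * y - rho * x < o + len k'.
  by apply: child1_cover => //; move: hy => /andP[y1 y2]; have := rho_gt1; nra.
have [U [hU hUy]] := IH k' (rho * x + o) (rho * y) (child1_range c) ltac:(lra).
by exists U; split; [exists k', o | rewrite exprSr -mulrA].
Qed.

Lemma supertile1_disjoint n k x U V y : (1 <= k <= N)%N ->
  supertile1 n k x U -> supertile1 n k x V ->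
  U.2 <= y < U.2 + len U.1 -> V.2 <= y < V.2 + len V.1 -> U = V.
Proof.
elim: n k x => [|n IH] k x kr /=; first by move=> -> ->.
case=> k1 [o1 [c1 hU]] [k2 [o2 [c2 hV]]] yU yV.
have P := exprn_gt0 n rho_gt0.
have scale k' o U' : supertile1 n k' (rho * x + o) U' -> (1 <= k' <= N)%N ->
    U'.2 <= y < U'.2 + len U'.1 -> o <= y / rho ^+ n - rho * x < o + len k'.
  move=> hU' kr' /andP[y1 y2]; have [lo hi] := supertile1_inside kr' hU'.
  rewrite lerBrDr ltrBlDr ler_pdivlMr // ltr_pdivrMr // ![_ * rho ^+ n]mulrC.
  by apply/andP; split; lra.
have [ek eo] := child1_disjoint c1 c2 (scale _ _ _ hU (child1_range c1) yU)
  (scale _ _ _ hV (child1_range c2) yV).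
by rewrite ek eo in hU; apply: IH (child1_range c2) hU hV yU yV.
Qed.

Definition canon_child (S : nat * R) := (canon_type S.1, rho * S.2 + canon_offset S.1).

(* For s >= 2, the canonical child (s - 1, rho z) of (s, z) would also be the
   child of type s - 1 of a type-1 tile at z' with rho z' + off (s - 1) = rho z
   (when b (s - 1)); decoy (s, z) is the type-N child of that type-1 tile. *)
Definition decoy (S : nat * R) := (N, rho * S.2 - off S.1.-1 + off N).

Lemma canon_parent S S' k o : (1 <= S.1 <= N)%N -> (1 <= S'.1 <= N)%N ->
  child1 S'.1 k o -> (k, rho * S'.2 + o) = canon_child S ->
  S' = S \/ [/\ (2 <= S.1)%N, S'.1 = 1%N, b S.1.-1 & rho * S'.2 + off S.1.-1 = rho * S.2].
Proof.
case: S S' => s z [s' z'] /= sr s'r c [kE zE]; subst k.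
rewrite /canon_type /canon_offset in c zE.
have [s1|s1] := eqVneq s 1%N.
  rewrite s1 /= in c zE; have [|-> o1] := child1_typeN _ c; first by case/andP: s'r.
  by left; rewrite s1; congr (_, _); apply: (mulfI rho_neq0); lra.
rewrite (negbTE s1) in c zE.
case: c => [[-> [_ [bk o1]]]|[s'2 [s'E o1]]]; first by right; split => //; [lia | lra].
by left; congr (_, _); [lia | apply: (mulfI rho_neq0); lra].
Qed.

Section Tiling1.

Variables (ts : nat -> nat) (xs : nat -> R).
Hypothesis ts_range : forall n, (1 <= ts n <= N)%N.
Hypothesis supertile1_nested : forall n U,
  supertile1 n (ts n) (xs n) U -> supertile1 n.+1 (ts n.+1) (xs n.+1) U.
Hypothesis supertile1_covering : forall y,
  exists n U, supertile1 n (ts n) (xs n) U /\ U.2 <= y <= U.2 + len U.1.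

(* patch m j is the (m + j)-th patch decomposed only j times: its tiles are
   those of the m-times composed tessellation, rescaled by rho^-m. *)
Definition patch m j U := supertile1 j (ts (m + j)) (xs (m + j)) U.
Definition patch_lo m j := rho ^+ j * xs (m + j).
Definition patch_hi m j := rho ^+ j * (xs (m + j) + len (ts (m + j))).

Lemma patch_range m j U : patch m j U -> (1 <= U.1 <= N)%N.
Proof. exact: supertile1_range. Qed.

Lemma patch_inside m j U : patch m j U -> patch_lo m j <= U.2 /\ U.2 + len U.1 <= patch_hi m j.
Proof. exact: supertile1_inside. Qed.

Lemma patch_disjoint m j U V y : patch m j U -> patch m j V ->
  U.2 <= y < U.2 + len U.1 -> V.2 <= y < V.2 + len V.1 -> U = V.
Proof. exact: supertile1_disjoint. Qed.

Lemma patch_cover m j y : patch_lo m j <= y < patch_hi m j ->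
  exists U, patch m j U /\ U.2 <= y < U.2 + len U.1.
Proof.
move=> /andP[y1 y2]; have P := exprn_gt0 j rho_gt0.
have [|U [hU yU]] := supertile1_cover j (x := xs (m + j)) (y := y / rho ^+ j) (ts_range (m + j)).
  by rewrite ler_pdivlMr // ltr_pdivrMr // ![_ * rho ^+ j]mulrC y1.
by exists U; split => //; move: yU; rewrite mulrC divfK ?gt_eqF.
Qed.

Lemma patch_child m j S k o : patch m.+1 j S -> child1 S.1 k o -> patch m j.+1 (k, rho * S.2 + o).
Proof.
by move=> hS c; rewrite /patch addnS -addSn; apply/supertile1S; exists S; split => //; exists k, o.
Qed.

Lemma patch_parent m j U : patch m j.+1 U ->
  exists S, patch m.+1 j S /\ exists k o, child1 S.1 k o /\ U = (k, rho * S.2 + o).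
Proof. by rewrite /patch addnS -addSn => /supertile1S. Qed.

Lemma patch_lo_shift m j : patch_lo m j.+1 = rho * patch_lo m.+1 j.
Proof. by rewrite /patch_lo addnS -addSn exprS mulrA. Qed.

Lemma patch_hi_shift m j : patch_hi m j.+1 = rho * patch_hi m.+1 j.
Proof. by rewrite /patch_hi addnS -addSn exprS mulrA. Qed.

Lemma patch_lo_scale m j : rho ^+ m * patch_lo m j = patch_lo 0 (m + j).
Proof. by rewrite /patch_lo mulrA -exprD. Qed.

Lemma patch_hi_scale m j : rho ^+ m * patch_hi m j = patch_hi 0 (m + j).
Proof. by rewrite /patch_hi mulrA -exprD. Qed.

Lemma patch_lo_lt_hi m j : patch_lo m j < patch_hi m j.
Proof. by rewrite ltr_pM2l ?exprn_gt0 ?rho_gt0 // ltrDl len_gt0. Qed.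

Lemma patch0_mem j y : patch_lo 0 j <= y < patch_hi 0 j ->
  patch_lo 0 j.+1 <= y < patch_hi 0 j.+1.
Proof.
move=> /patch_cover [U [hU /andP[y1 y2]]].
by have [lo hi] := patch_inside (m := 0) (supertile1_nested hU); apply/andP; split; lra.
Qed.

Lemma patch0_bounds_step j : patch_lo 0 j.+1 <= patch_lo 0 j /\ patch_hi 0 j <= patch_hi 0 j.+1.
Proof.
have lohi := patch_lo_lt_hi 0 j.
split; first by case/andP: (patch0_mem (j := j) (y := patch_lo 0 j) ltac:(by rewrite lexx lohi)).
rewrite leNgt; apply/negP => hij.
have : patch_lo 0 j <= Num.max (patch_lo 0 j) (patch_hi 0 j.+1) < patch_hi 0 j.
  by rewrite gt_max lohi hij le_max lexx.
by move/patch0_mem => /andP[_]; rewrite gt_max ltxx andbF.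
Qed.

Lemma patch_bounds_mono m j j' : (j <= j')%N ->
  patch_lo m j' <= patch_lo m j /\ patch_hi m j <= patch_hi m j'.
Proof.
move=> /subnK <-; elim: (j' - j)%N => [|n [lo hi]]; first by rewrite !lexx.
have P := exprn_gt0 m rho_gt0; have [lo' hi'] := patch0_bounds_step (m + (n + j)).
rewrite addSn; split.
  by apply: le_trans lo; rewrite -(ler_pM2l P) !patch_lo_scale addnS.
by apply: le_trans hi _; rewrite -(ler_pM2l P) !patch_hi_scale addnS.
Qed.

Lemma patch0_exhaust y : exists j0, forall j, (j0 <= j)%N ->
  patch_lo 0 j <= y /\ y <= patch_hi 0 j.
Proof.
have [n [U [hU /andP[y1 y2]]]] := supertile1_covering y.
have [lo hi] := patch_inside (m := 0) (j := n) hU.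
by exists n => j /(patch_bounds_mono 0) [lo' hi']; split; lra.
Qed.

Lemma patch_exhaust m a c : exists j0, forall j, (j0 <= j)%N ->
  patch_lo m j <= a /\ c <= patch_hi m j.
Proof.
have P := exprn_gt0 m rho_gt0.
have [ja Ha] := patch0_exhaust (rho ^+ m * a); have [jc Hc] := patch0_exhaust (rho ^+ m * c).
exists (maxn ja jc) => j hj.
have [+ _] := Ha (m + j)%N ltac:(lia); have [_ +] := Hc (m + j)%N ltac:(lia).
by rewrite -patch_lo_scale -patch_hi_scale !ler_pM2l.
Qed.

Lemma patch_canon m j S : patch m.+1 j S -> patch m j.+1 (canon_child S).
Proof. by move=> hS; apply: patch_child hS (child1_canon (patch_range hS)). Qed.

Lemma patch_lift_canon m j S : (1 <= S.1 <= N)%N -> patch m j.+1 (canon_child S) ->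
  ((2 <= S.1)%N -> b S.1.-1 -> ~ patch m j.+1 (decoy S)) -> patch m.+1 j S.
Proof.
move=> Sr /patch_parent [S' [hS' [k [o [c cE]]]]] nodecoy.
have [<-|[s2 S'1 bs zE]] := canon_parent Sr (patch_range hS') c (esym cE) => //.
have cN : child1 S'.1 N (off N) by rewrite S'1; apply: child1_oneN.
case: (nodecoy s2 bs); have := patch_child hS' cN.
by congr (patch _ _ (_, _)); rewrite /= -zE; lra.
Qed.

Lemma patch_decoy_false m j S : patch m.+1 j S -> (2 <= S.1)%N -> b S.1.-1 ->
  ~ patch m j.+1 (decoy S).
Proof.
move=> hS s2 bs /patch_parent [S' [hS' [k [o [c [kE oE]]]]]].
have Sr := patch_range hS; have S'r := patch_range hS'.
move: c; rewrite -kE => /child1_typeN [|S'1 o1]; first by case/andP: S'r.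
rewrite o1 in oE; have offs := offset1_len_le1 bs ltac:(lia).
have lg := len_gt0 S.1.-1; have og := offset1_ge0 S.1.-1; have P := rho_gt0.
suff S'E : S' = S by move: s2; rewrite -S'E S'1.
apply: (patch_disjoint (y := S.2) hS' hS); rewrite ?S'1 ?lexx ?ltrDl ?len_gt0 //.
by rewrite -(ler_pM2l P) -(ltr_pM2l P) mulrDr rho_len1; apply/andP; split; lra.
Qed.

Definition margin m : R := m%:R * 2.

Lemma margin_ge0 m : 0 <= margin m. Proof. by rewrite mulr_ge0 ?ler0n. Qed.

(* Recognising a level-(m+1) tile only involves level-m tiles at distance at
   most 2 from its inflation, so margins grow by 2 per level. *)
Lemma margin_step m : margin m + 2 <= rho * margin m.+1.
Proof.
have := margin_ge0 m; have := rho_gt1.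
by rewrite /margin -[m.+1]addn1 natrD mulrDl mul1r; nra.
Qed.

Definition deep m j U :=
  patch_lo m j + margin m <= U.2 /\ U.2 + len U.1 + margin m <= patch_hi m j.

Lemma deep_mono m j j' U : (j <= j')%N -> deep m j U -> deep m j' U.
Proof. by move=> /(patch_bounds_mono m) [lo hi] [dlo dhi]; split; lra. Qed.

Lemma patch_descend m j U :
  (forall V, patch m j V -> deep m j V -> patch m j.+1 V) -> patch m j.+1 U ->
  patch_lo m j + margin m + 1 <= U.2 -> U.2 + 1 + margin m <= patch_hi m j ->
  patch m j U.
Proof.
move=> stable hU lo hi; have := margin_ge0 m => mg.
have [|V [hV /andP[y1 y2]]] := patch_cover (m := m) (j := j) (y := U.2).
  by apply/andP; split; lra.
have lV := len_le1 V.1; have gV := len_gt0 V.1; have gU := len_gt0 U.1.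
suff -> : U = V by [].
apply: (patch_disjoint (y := U.2) hU (stable _ hV _)); rewrite ?lexx ?ltrDl ?y1 ?y2 //.
by split; lra.
Qed.

Lemma patch_deep_succ m j U : patch m j U -> deep m j U -> patch m j.+1 U.
Proof.
elim: m j U => [|m IH] j S hS [dlo dhi]; first exact: supertile1_nested.
have Sr := patch_range hS; have [c0 c1] := child1_inside (child1_canon Sr).
have ms := margin_step m; have mg := margin_ge0 m.
have rlen := mulr_ge0 (ltW rho_gt0) (ltW (len_gt0 S.1)).
have := ler_wpM2l (ltW rho_gt0) dhi; have := ler_wpM2l (ltW rho_gt0) dlo.
rewrite !mulrDr => rlo rhi.
apply: (patch_lift_canon Sr).
  apply: IH; first exact: patch_canon.
  by rewrite /deep /= patch_lo_shift patch_hi_shift; split; lra.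
move=> s2 bs hB; apply: (patch_decoy_false hS s2 bs); apply: (patch_descend _ hB) => /=.
- by move=> V; apply: IH.
- have := offset1_le1 (leq_trans (leq_pred S.1) (leqW (proj2 (andP Sr)))).
  by have := offset1_ge0 N; rewrite patch_lo_shift; lra.
- have := offset1_le1 (leqnSn N).
  by have := offset1_ge0 S.1.-1; rewrite patch_hi_shift; lra.
Qed.

Definition level_tile m U := exists j0, forall j, (j0 <= j)%N -> patch m j U.

Lemma deep_level_tile m j U : patch m j U -> deep m j U -> level_tile m U.
Proof.
move=> hU dU; exists j => j' /subnK <-; elim: (j' - j)%N => [|n IH] //.
by rewrite addSn; apply: patch_deep_succ IH _; apply: deep_mono dU; apply: leq_addl.
Qed.

Lemma deep_eventually m U : exists j0, forall j, (j0 <= j)%N -> deep m j U.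
Proof.
have [j0 H] := patch_exhaust m (U.2 - margin m) (U.2 + len U.1 + margin m).
by exists j0 => j /H [lo hi]; split; lra.
Qed.

Lemma supertile1_level_tile0 n U : supertile1 n (ts n) (xs n) U -> level_tile 0 U.
Proof.
move=> hU; exists n => j /subnK <-; elim: (j - n)%N => [|k IH] //.
by rewrite addSn; apply: supertile1_nested.
Qed.

Lemma level_tile_range m U : level_tile m U -> (1 <= U.1 <= N)%N.
Proof. by case=> j0 /(_ j0 (leqnn _)) /patch_range. Qed.

Lemma level_tile_child m S k o : level_tile m.+1 S -> child1 S.1 k o ->
  level_tile m (k, rho * S.2 + o).
Proof. by case=> j0 hS c; exists j0.+1 => -[|j] // hj; apply: patch_child (hS j hj) c. Qed.

Lemma level_tile_disjoint m U V y : level_tile m U -> level_tile m V ->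
  U.2 <= y < U.2 + len U.1 -> V.2 <= y < V.2 + len V.1 -> U = V.
Proof.
case=> jU hU [jV hV]; apply: (patch_disjoint (j := maxn jU jV)).
  exact/hU/leq_maxl.
exact/hV/leq_maxr.
Qed.

Lemma level_tile_cover m y : exists U, level_tile m U /\ U.2 <= y < U.2 + len U.1.
Proof.
have [j0 H] := patch_exhaust m (y - margin m - 1) (y + margin m + 1).
have [lo hi] := H j0 (leqnn _); have := margin_ge0 m => mg.
have [|U [hU /andP[y1 y2]]] := patch_cover (m := m) (j := j0) (y := y).
  by apply/andP; split; lra.
exists U; split; last by rewrite y1.
by apply: deep_level_tile hU _; have := len_le1 U.1; split; lra.
Qed.

Lemma level_tile_decoy_false m S : level_tile m.+1 S -> (2 <= S.1)%N -> b S.1.-1 ->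
  ~ level_tile m (decoy S).
Proof.
case=> jS hS s2 bs [jB hB]; apply: (patch_decoy_false (hS (maxn jS jB) (leq_maxl _ _)) s2 bs).
by apply: hB; rewrite leqW // leq_maxr.
Qed.

Lemma level_tile_lift_canon m S : (1 <= S.1 <= N)%N -> level_tile m (canon_child S) ->
  ((2 <= S.1)%N -> b S.1.-1 -> ~ level_tile m (decoy S)) -> level_tile m.+1 S.
Proof.
move=> Sr [jK hK] nodecoy; have [jB dB] := deep_eventually m (decoy S).
exists (maxn jK jB) => j hj; apply: (patch_lift_canon Sr).
  by apply: hK; apply: leqW; apply: leq_trans hj; apply: leq_maxl.
move=> s2 bs hB; apply: (nodecoy s2 bs); apply: deep_level_tile hB _.
by apply: dB; apply: leqW; apply: leq_trans hj; apply: leq_maxr.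
Qed.

Definition shift_invariant m q := forall U, level_tile m U -> level_tile m (U.1, U.2 + q).

Lemma shift_invariant_deflate m q : shift_invariant 0 q -> shift_invariant 0 (- q) ->
  shift_invariant m (q / rho ^+ m).
Proof.
elim: m q => [|m IH] q Pq Pnq; first by rewrite expr0 divr1.
move=> S hS; have Sr := level_tile_range hS.
set qm := q / rho ^+ m; set q' := q / rho ^+ m.+1.
have qE : rho * q' = qm.
  by rewrite /q' /qm exprSr; field; rewrite ?mulf_neq0 ?expf_neq0 ?rho_neq0.
apply: level_tile_lift_canon => //=.
  have := IH q Pq Pnq _ (level_tile_child hS (child1_canon Sr)).
  by congr (level_tile _ (_, _)); rewrite /= mulrDr qE -/qm; lra.
move=> s2 bs hB; apply: (level_tile_decoy_false hS s2 bs).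
have Pnnq : shift_invariant 0 (- - q) by rewrite opprK.
have := IH (- q) Pnq Pnnq _ hB.
by congr (level_tile _ (_, _)); rewrite /= mulrDr qE mulNr -/qm; lra.
Qed.

Lemma level_tile_shift_eq0 m U q : level_tile m U -> level_tile m (U.1, U.2 + q) ->
  `|q| < len N -> q = 0.
Proof.
move=> hU hV; rewrite ltr_norml => /andP[q1 q2].
have lN := len_le (proj2 (andP (level_tile_range hU))); have gU := len_gt0 U.1.
suff: U = (U.1, U.2 + q) by move=> /(congr1 snd) /=; lra.
have [q0|q0] := lerP 0 q.
  by apply: (level_tile_disjoint (y := U.2 + q) hU hV) => /=; apply/andP; split; lra.
by apply: (level_tile_disjoint (y := U.2) hU hV) => /=; apply/andP; split; lra.
Qed.

Lemma shift_invariant0_eq0 p : shift_invariant 0 p -> shift_invariant 0 (- p) -> p = 0.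
Proof.
move=> Pp Pnp; have [m hm] := exprn_unbounded (`|p| / len N) rho_gt1.
have [U [hU _]] := level_tile_cover m 0; have P := exprn_gt0 m rho_gt0.
suff /eqP : p / rho ^+ m = 0.
  by rewrite mulf_eq0 invr_eq0 expf_eq0 (negbTE rho_neq0) andbF orbF => /eqP.
apply: (level_tile_shift_eq0 hU (shift_invariant_deflate Pp Pnp hU)).
by rewrite normrM normfV (gtr0_norm P) ltr_pdivrMr // mulrC -ltr_pdivrMr ?len_gt0.
Qed.

End Tiling1.
End Decomposition1.

Section Projection.

Variables (R : archiRealFieldType) (N : nat) (b : nat -> bool) (rho : R) (d : nat).
Hypothesis bN : b N.
Hypothesis offset1_end : offset1 b rho N.+1 = 1.

Lemma supertile_coord n (t : 'I_d -> nat) (x : 'I_d -> R) (T : tile R d) i :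
  supertile N b rho n t x T ->
  supertile1 N b rho n (t i) (x i) (T.1 i, T.2 i).
Proof.
elim: n t x => [|n IH] t x /=; first by move=> ->.
by case=> t' [o [c hT]]; exists (t' i), (o i); split; [apply: c | apply: IH hT].
Qed.

Lemma supertile1_lift n (t : 'I_d -> nat) (x : 'I_d -> R) i U :
  (forall j, (1 <= t j <= N)%N) ->
  supertile1 N b rho n (t i) (x i) U ->
  exists T, supertile N b rho n t x T /\ (T.1 i, T.2 i) = U.
Proof.
elim: n t x U => [|n IH] t x U tr /=; first by move=> ->; exists (t, x).
case=> k [o [c hU]].
pose t' j := if j == i then k else canon_type N (t j).
pose o' j := if j == i then o else canon_offset N b rho (t j).
have c' : childd N b rho t t' o'.
  by move=> j; rewrite /t' /o'; case: eqP => [->|_] //; apply: child1_canon.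
have t'r j : (1 <= t' j <= N)%N.
  rewrite /t'; case: eqP => _; first exact: child1_range c.
  exact: child1_range (child1_canon bN offset1_end (tr j)).
have [|T [hT TU]] := IH t' (fun j => rho * x j + o' j) U t'r; first by rewrite /t' /o' eqxx.
by exists T; split => //; exists t', o'.
Qed.

Variables (ts : nat -> 'I_d -> nat) (xs : nat -> 'I_d -> R) (Tl : tile R d -> Prop).
Hypothesis ts_range : forall n i, (1 <= ts n i <= N)%N.
Hypothesis supertile_nested : forall n T,
  supertile N b rho n (ts n) (xs n) T -> supertile N b rho n.+1 (ts n.+1) (xs n.+1) T.
Hypothesis Tl_supertile : forall T, Tl T <-> exists n, supertile N b rho n (ts n) (xs n) T.
Hypothesis Tl_cover : forall y, exists T, Tl T /\ tile_support rho T y.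

Variable i : 'I_d.

Lemma coord_nested n U : supertile1 N b rho n (ts n i) (xs n i) U ->
  supertile1 N b rho n.+1 (ts n.+1 i) (xs n.+1 i) U.
Proof.
move=> /(supertile1_lift (ts_range n)) [T [hT <-]].
exact: supertile_coord (supertile_nested hT).
Qed.

Lemma coord_cover y : exists n U, supertile1 N b rho n (ts n i) (xs n i) U /\
  U.2 <= y <= U.2 + rho ^- U.1.
Proof.
have [T [/Tl_supertile [n hT] yT]] := Tl_cover (fun=> y).
by exists n, (T.1 i, T.2 i); split; [apply: supertile_coord hT | apply: yT].
Qed.

Lemma coord_shift_invariant w : (forall t x, Tl (t, x) -> Tl (t, fun j => x j + w j)) ->
  shift_invariant N b rho (fun n => ts n i) (fun n => xs n i) 0 (w i).
Proof.
move=> Tlw U [j0 hU].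
have [[t x] [hT <-]] := supertile1_lift (ts_range j0) (hU j0 (leqnn _)).
have [n hn] := (Tl_supertile _).1 (Tlw t x ((Tl_supertile _).2 (ex_intro _ j0 hT))).
exact: supertile1_level_tile0 coord_nested _ _ (supertile_coord i hn).
Qed.

End Projection.

Theorem mainTheorem9 (R : realType) (N : nat) (b : nat -> bool) (rho : R)
  (d : nat) (Tl : tile R d -> Prop) :
  (2 <= N)%N -> b N ->
  (1 < \sum_(1 <= j < N.+1) b j * 2 ^ (N - j))%N ->
  root (inflation_poly R N b) rho ->
  (forall x : R, root (inflation_poly R N b) x -> x <= rho) ->
  (1 <= d)%N ->
  constructed_by_inflation N b rho Tl ->
  ~ periodic Tl.
Proof.
move=> N2 bN sum_gt1 root_rho rho_max d0 [ts [xs [ts_range [nested [Tl_ts cover]]]]]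
  [L [L_lattice L_period]].
have [x x1 root_x] := inflation_poly_root_gt1 R (ltnW N2) (sum_b_gt1 bN sum_gt1).
have rho_gt1 : 1 < rho := lt_le_trans x1 (rho_max x root_x).
have off_end := inflation_poly_root_offset1 (rho_neq0 rho_gt1) root_rho.
have [v [i [Lv Lnv vi]]] := lattice_coord_neq0 d0 L_lattice.
have shift_inv w := coord_shift_invariant bN off_end ts_range nested Tl_ts (i := i) (w := w).
apply: (negP vi); apply/eqP.
apply: (shift_invariant0_eq0 bN off_end rho_gt1 (ts_range^~ i)
  (coord_nested bN off_end ts_range nested (i := i)) (coord_cover Tl_ts cover i)).
  exact: shift_inv (fun t x => (L_period v Lv t x).1).
by rewrite -sub0r; apply: shift_inv (fun t x => (L_period _ Lnv t x).1).
Qed.
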